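(* Let $n\ge4$, let $c,\gamma\in\mathbb{F}_{2^n}\setminus\{0,1\}$, and let $F=\mathrm{Inv}\circ(0,1,\gamma)$. If $c\notin\{\gamma,\gamma^{-1},\gamma+1,(\gamma+1)^{-1}\}$ and $\mathrm{tr}\left(\frac{\gamma}{c(\gamma+1)}\right)=\mathrm{tr}(c^{-1}\gamma^{-1})=\mathrm{tr}\left(\frac{\gamma(c\gamma+1)}{(\gamma+1)^2}\right)=\mathrm{tr}\left(\frac{c\gamma}{(c\gamma+c+1)^2}\right)=\mathrm{tr}\left(\frac{\gamma(c+\gamma+1)}{c(\gamma+1)^2}\right)=\mathrm{tr}\left(\frac{\gamma(c+\gamma)}{c(\gamma+1)^2}\right)=\mathrm{tr}\left(\frac{c\gamma^2}{(c+\gamma)^2}\right)=\mathrm{tr}\left(\frac{c\gamma}{(c+\gamma+1)^2}\right)=\mathrm{tr}\left(\frac{c\gamma^2}{(c\gamma+1)^2}\right)=\mathrm{tr}\left(\frac{c\gamma}{\gamma+1}\right)=\mathrm{tr}(c\gamma^{-1})=\mathrm{tr}\left(\frac{(c\gamma+c+1)\gamma}{(\gamma+1)^2}\right)=1,$ then ${}_c\Delta_F=3$.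
   Context: $\mathrm{Inv}(x)=x^{2^n-2}$ on $\mathbb{F}_{2^n}$. $(0,1,\gamma)$ is the $3$-cycle sending $0\mapsto1$, $1\mapsto\gamma$, $\gamma\mapsto0$ and fixing all other elements; thus $F(0)=1$, $F(1)=\gamma^{-1}$, $F(\gamma)=0$ and $F(x)=x^{-1}$ otherwise. $\mathrm{tr}$ is the absolute trace $\mathbb{F}_{2^n}\to\mathbb{F}_2$. For $c\in\mathbb{F}_{2^n}$, ${}_cD_aF(x)=F(x+a)+cF(x)$; ${}_c\Delta_F(a,b)$ is the number of $x\in\mathbb{F}_{2^n}$ with ${}_cD_aF(x)=b$; and ${}_c\Delta_F=\max\{{}_c\Delta_F(a,b): a,b\in\mathbb{F}_{2^n},\ a\neq 0 \text{ if } c=1\}$. *)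

(* F_{2^n} is modelled as an arbitrary finite field F of
   characteristic 2 with #|F| = 2^n (unique up to isomorphism). *)
From mathcomp Require Import all_boot all_order all_algebra all_field.
Set Implicit Arguments. Unset Strict Implicit. Unset Printing Implicit Defensive.
Import GRing.Theory.
Local Open Scope ring_scope.

Definition Inv (F : finFieldType) (x : F) : F := x ^+ (#|F| - 2)%N.

Definition cyc3 (F : finFieldType) (g : F) (x : F) : F :=
  if x == 0 then 1 else if x == 1 then g else if x == g then 0 else x.

Definition Fswap (F : finFieldType) (g : F) (x : F) : F := Inv (cyc3 g x).

(* absolute trace F_{2^n} -> F_2 (valued in the prime subfield of F) *)
Definition tr (F : finFieldType) (n : nat) (x : F) : F :=
  \sum_(i < n) x ^+ (2 ^ i)%N.

Definition cDeltaAB (F : finFieldType) (f : F -> F) (c a b : F) : nat :=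
  #|[set x : F | f (x + a) + c * f x == b]|.

Definition cDelta (F : finFieldType) (f : F -> F) (c : F) : nat :=
  \max_(p : F * F | (c != 1) || (p.1 != 0)) cDeltaAB f c p.1 p.2.

From mathcomp Require Import all_boot all_order all_algebra all_field.
From mathcomp Require Import ring zify.
Import GRing.Theory.
Local Open Scope ring_scope.

(* Write D_a x = F (x + a) + c F x, so that [cDeltaAB F c a b] counts the
   solutions of D_a x = b.  F is a bijection that agrees with inversion off
   {0, 1, g} and c <> 1, so D_0 is injective and D_a x <> D_a (x + a) when
   a <> 0.  Call x exceptional for a if x or x + a lies in {0, 1, g}.  A
   non-exceptional solution is a root of b x^2 + (a b + 1 + c) x + c a, so there
   are at most two of them, and translation by a maps exceptional solutions to
   exceptional non-solutions, so at most three of the six exceptional points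
   are solutions.  Two exceptional solutions and a non-exceptional one never
   coexist: equating the values at the two exceptional points gives a quadratic
   equation A a^2 + B a + C = 0 (or, when a is 1, g or g + 1, determines c, and
   the third solution supplies the quadratic), a root of which makes A C / B^2
   of the form y^2 + y, hence of trace 0, whereas A C / B^2 is one of the twelve
   elements of trace 1.  For the lower bound three solutions are exhibited,
   chosen according to whether c^2 + c + 1 or c^3 + c + 1 vanishes. *)

Lemma uniq_map_in_inj {T1 T2 : eqType} {f : T1 -> T2} {s : seq T1} :
  uniq (map f s) -> {in s &, injective f}.
Proof.
elim: s => //= z s IH /andP[fz_notin u] x y; rewrite !inE.
move=> /orP[/eqP->|xs] /orP[/eqP->|ys] // E; last exact: IH.
- by case/negP: fz_notin; rewrite E map_f.
- by case/negP: fz_notin; rewrite -E map_f.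
Qed.

Lemma in4_sym_rel (T : eqType) (R : T -> T -> Prop) (p q r s : T) :
  (forall x, R x x) -> (forall x y, R x y -> R y x) ->
  R p q -> R p r -> R p s -> R q r -> R q s -> R r s ->
  {in [:: p; q; r; s] &, forall x y, R x y}.
Proof.
move=> Rxx Rsym pq pr ps qr qs rs x y; rewrite !inE.
by move=> /or4P[]/eqP-> /or4P[]/eqP->; auto.
Qed.

Lemma card_quadratic_roots (F : finFieldType) (A B C : F) (X : {set F}) :
  C != 0 -> {in X, forall x, A * x ^+ 2 + B * x + C = 0} -> (#|X| <= 2)%N.
Proof.
move=> C0 rootX; pose p := Poly [:: C; B; A].
have p0 : p != 0.
  by apply: contraNneq C0 => p0; rewrite -[C]/(nth 0 [:: C; B; A] 0) -coef_Poly -/p p0 coef0.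
have rootp : all (root p) (enum X).
  apply/allP=> x; rewrite mem_enum => /rootX rx; apply/eqP; rewrite horner_Poly -{}rx /=; ring.
by rewrite cardE -ltnS (leq_trans (max_poly_roots p0 rootp (enum_uniq X))) ?size_Poly.
Qed.

Lemma cDeltaAB_ge3 (F : finFieldType) (f : F -> F) (c a b x y z : F) :
  uniq [:: x; y; z] -> f (x + a) + c * f x = b -> f (y + a) + c * f y = b ->
  f (z + a) + c * f z = b -> (3 <= cDeltaAB f c a b)%N.
Proof.
move=> xyz Dx Dy Dz; have <- : #|[:: x; y; z]| = 3%N by apply/card_uniqP.
by apply/subset_leq_card/subsetP=> w; rewrite !inE => /or3P[]/eqP->; rewrite ?Dx ?Dy ?Dz.
Qed.

(** * Characteristic two *)

Section Char2.

Context {F : fieldType}.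
Hypothesis char2 : 2%N \in [pchar F].

Lemma natr_even k : (k + k)%:R = 0 :> F.
Proof. by rewrite addnn -muln2 natrM (pcharf0 char2) mulr0. Qed.

Lemma natr_odd k : (k + k + 1)%:R = 1 :> F.
Proof. by rewrite natrD natr_even add0r. Qed.

Lemma addr_eq0_pchar2 (x y : F) : (x + y == 0) = (x == y).
Proof. by rewrite addr_eq0 (oppr_pchar2 char2). Qed.

Lemma addr_neq_pchar2 {u v : F} (w : F) : u + v = w -> w != 0 -> u != v.
Proof. by move=> <-; rewrite addr_eq0_pchar2. Qed.

Lemma addr_eq_pchar2 (x y z : F) : (x + y == z) = (x == z + y).
Proof. by rewrite -(GRing.subr_pchar2 char2) subr_eq. Qed.

Lemma eq_of_mulr_addr (K : F) {x y u v : F} :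
  K * (x + y) = u + v -> K != 0 -> u = v -> x = y.
Proof.
move=> E K0 uv; apply/eqP; rewrite -addr_eq0_pchar2.
have : K * (x + y) == 0 by rewrite E uv addrr_pchar2.
by rewrite mulf_eq0 (negbTE K0).
Qed.

End Char2.

Create HintDb nonzero.

Ltac nonzero := solve [repeat (apply/andP; split);
  repeat first [exact: oner_neq0 | apply: mulf_neq0 | apply: invr_neq0 | apply: expf_neq0];
  auto with nonzero].

(* [field] normalises with integer coefficients and uses a hypothesis
   [n%:R = m%:R] only on a coefficient equal to [n]: reducing coefficients
   modulo 2 takes one hypothesis per coefficient that may occur. *)
Tactic Notation "field2" constr_list(hyps) :=
  match goal with char2 : is_true (2%N \in [pchar _]) |- _ =>
  field: hyps
    (natr_even char2 1) (natr_even char2 2) (natr_even char2 3) (natr_even char2 4)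
    (natr_even char2 5) (natr_even char2 6) (natr_even char2 7) (natr_even char2 8)
    (natr_even char2 9) (natr_even char2 10) (natr_even char2 11)
    (natr_even char2 12) (natr_odd char2 1) (natr_odd char2 2) (natr_odd char2 3)
    (natr_odd char2 4) (natr_odd char2 5) (natr_odd char2 6) (natr_odd char2 7)
    (natr_odd char2 8) (natr_odd char2 9) (natr_odd char2 10) (natr_odd char2 11)
  end; nonzero.

Tactic Notation "field2_big" :=
  match goal with char2 : is_true (2%N \in [pchar _]) |- _ =>
  field2
    (natr_even char2 13) (natr_even char2 14) (natr_even char2 15)
    (natr_even char2 16) (natr_even char2 17) (natr_even char2 18)
    (natr_even char2 19) (natr_even char2 20) (natr_even char2 21)
    (natr_even char2 22) (natr_even char2 23) (natr_even char2 24)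
    (natr_even char2 25) (natr_even char2 26) (natr_even char2 27)
    (natr_even char2 28) (natr_even char2 29) (natr_even char2 30)
    (natr_even char2 31) (natr_even char2 32) (natr_odd char2 12)
    (natr_odd char2 13) (natr_odd char2 14) (natr_odd char2 15) (natr_odd char2 16)
    (natr_odd char2 17) (natr_odd char2 18) (natr_odd char2 19) (natr_odd char2 20)
    (natr_odd char2 21) (natr_odd char2 22) (natr_odd char2 23) (natr_odd char2 24)
    (natr_odd char2 25) (natr_odd char2 26) (natr_odd char2 27) (natr_odd char2 28)
    (natr_odd char2 29) (natr_odd char2 30) (natr_odd char2 31)
  end.

(** * The absolute trace *)

Section Trace.

Context {F : finFieldType} {n : nat}.
Hypotheses (char2 : 2%N \in [pchar F]) (card_F : #|F| = (2 ^ n)%N).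

Lemma trD (x y : F) : tr n (x + y) = tr n x + tr n y.
Proof.
rewrite /tr -big_split; apply: eq_bigr => i _; apply: exprDn_pchar.
by rewrite pnatX (eq_pnat _ (pcharf_eq char2)) pnat_id ?(pcharf_prime char2).
Qed.

Lemma tr_sqr_add (y : F) : tr n (y ^+ 2 + y) = 0.
Proof.
rewrite trD /tr -big_split /=.
under eq_bigr => i _ do rewrite -exprM -expnS -(GRing.subr_pchar2 char2).
rewrite -(big_mkord xpredT (fun i => y ^+ (2 ^ i.+1) - y ^+ (2 ^ i))).
by rewrite telescope_sumr // -card_F expf_card subrr.
Qed.

Lemma tr1_neq_sqr_add (h y : F) : tr n h = 1 -> h != y ^+ 2 + y.
Proof.
move=> trh; apply/eqP=> Eh; move: trh.
by rewrite Eh tr_sqr_add => /eqP; rewrite eq_sym oner_eq0.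
Qed.

Lemma tr1_quadratic_rootN (h w A B C x : F) :
  tr n h = 1 -> h = A * C / B ^+ 2 + (w ^+ 2 + w) -> A * x ^+ 2 + B * x + C != 0.
Proof.
move=> trh Eh; apply/eqP=> root; move/(tr1_neq_sqr_add _ (A * x / B + w))/eqP: trh; apply.
have [B0|B0] := eqVneq B 0; first by rewrite Eh B0 expr0n /= invr0 !mulr0 !add0r.
have EC : C = A * x ^+ 2 + B * x by apply/esym/eqP; rewrite -addr_eq0_pchar2 // root.
by rewrite Eh EC; field2.
Qed.

Lemma tr1_separates {h u v : F} (A B C K x : F) : tr n h = 1 -> h = A * C / B ^+ 2 ->
  K * (u + v) = A * x ^+ 2 + B * x + C -> u != v.
Proof.
move=> trh Eh EK; apply/eqP=> uv.
have h0 : h = A * C / B ^+ 2 + (0 ^+ 2 + 0) by rewrite Eh expr0n /= !addr0.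
by move: (@tr1_quadratic_rootN h 0 A B C x trh h0); rewrite -EK uv addrr_pchar2 // mulr0 eqxx.
Qed.

Lemma tr1_neq {h u v : F} (y M : F) : tr n h = 1 -> h = y ^+ 2 + y + M * (u + v) -> u != v.
Proof.
move=> trh Eh; apply/eqP=> uv; move: Eh; rewrite uv addrr_pchar2 // mulr0 addr0.
exact/eqP/tr1_neq_sqr_add.
Qed.

Lemma tr_add3 {h1 h2 h3 : F} :
  tr n h1 = 1 -> tr n h2 = 1 -> tr n h3 = 1 -> tr n (h1 + h2 + h3) = 1.
Proof. by move=> t1 t2 t3; rewrite !trD t1 t2 t3 addrr_pchar2 // add0r. Qed.

End Trace.

(** * The permuted inverse *)

Section PermutedInverse.

Context {F : finFieldType} {g : F}.
Hypotheses (F_gt2 : (2 < #|F|)%N) (g0 : g != 0) (g1 : g != 1).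

Lemma InvE (x : F) : Inv x = x^-1.
Proof.
have [->|x0] := eqVneq x 0; first by rewrite /Inv expr0n invr0 subn_eq0 leqNgt F_gt2.
apply: (mulIf x0); rewrite mulVf //; apply: (mulIf x0); rewrite mul1r -!exprSr.
by rewrite -add2n subnKC ?expf_card // ltnW.
Qed.

Lemma cyc3_0 : cyc3 g 0 = 1.
Proof. by rewrite /cyc3 eqxx. Qed.

Lemma cyc3_1 : cyc3 g 1 = g.
Proof. by rewrite /cyc3 oner_eq0 eqxx. Qed.

Lemma cyc3_g : cyc3 g g = 0.
Proof. by rewrite /cyc3 (negbTE g0) (negbTE g1) eqxx. Qed.

Lemma cyc3E (x : F) : x \notin [:: 0; 1; g] -> cyc3 g x = x.
Proof. by rewrite !inE !negb_or /cyc3 => /and3P[/negbTE-> /negbTE-> /negbTE->]. Qed.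

Lemma cyc3_inj : injective (cyc3 g).
Proof.
apply: (can_inj (g := cyc3 g \o cyc3 g)) => x /=.
have [x3|x3] := boolP (x \in [:: 0; 1; g]); last by rewrite !cyc3E.
by move: x3; rewrite !inE => /or3P[]/eqP->; rewrite ?cyc3_0 ?cyc3_1 ?cyc3_g ?cyc3_0 ?cyc3_1.
Qed.

Lemma Fswap0 : Fswap g 0 = 1.
Proof. by rewrite /Fswap cyc3_0 InvE invr1. Qed.

Lemma Fswap1 : Fswap g 1 = g^-1.
Proof. by rewrite /Fswap cyc3_1 InvE. Qed.

Lemma Fswapg : Fswap g g = 0.
Proof. by rewrite /Fswap cyc3_g InvE invr0. Qed.

Lemma FswapE (x : F) : x \notin [:: 0; 1; g] -> Fswap g x = x^-1.
Proof. by move=> x3; rewrite /Fswap cyc3E // InvE. Qed.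

Lemma Fswap_inj : injective (Fswap g).
Proof. by move=> x y; rewrite /Fswap !InvE => /invr_inj/cyc3_inj. Qed.

End PermutedInverse.

(** * The c-differential uniformity of [Inv \o (0, 1, g)] *)

Definition exceptional {F : fieldType} (g a : F) : seq F := [:: 0; 1; g; a; a + 1; a + g].

Section CDifferentialUniformity.

Variables (F : finFieldType) (n : nat) (c g : F).
Hypotheses (char2 : 2%N \in [pchar F]) (card_F : #|F| = (2 ^ n)%N) (n_ge4 : (4 <= n)%N).
Hypotheses (c0 : c != 0) (c1 : c != 1) (g0 : g != 0) (g1 : g != 1).
Hypotheses (c_neq_g : c != g) (c_neq_gV : c != g^-1).
Hypotheses (c_neq_g1 : c != g + 1) (c_neq_g1V : c != (g + 1)^-1).
Hypotheses (tr1 : tr n (g / (c * (g + 1))) = 1) (tr2 : tr n (c^-1 * g^-1) = 1).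
Hypotheses (tr3 : tr n (g * (c * g + 1) / (g + 1) ^+ 2) = 1).
Hypotheses (tr4 : tr n (c * g / (c * g + c + 1) ^+ 2) = 1).
Hypotheses (tr5 : tr n (g * (c + g + 1) / (c * (g + 1) ^+ 2)) = 1).
Hypotheses (tr6 : tr n (g * (c + g) / (c * (g + 1) ^+ 2)) = 1).
Hypotheses (tr7 : tr n (c * g ^+ 2 / (c + g) ^+ 2) = 1).
Hypotheses (tr8 : tr n (c * g / (c + g + 1) ^+ 2) = 1).
Hypotheses (tr9 : tr n (c * g ^+ 2 / (c * g + 1) ^+ 2) = 1).
Hypotheses (tr10 : tr n (c * g / (g + 1)) = 1) (tr11 : tr n (c * g^-1) = 1).
Hypotheses (tr12 : tr n ((c * g + c + 1) * g / (g + 1) ^+ 2) = 1).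

Local Notation D a x := (Fswap g (x + a) + c * Fswap g x%R).
Local Notation regular x := (x \notin [:: 0; 1; g]).

Lemma card_F_gt2 : (2 < #|F|)%N.
Proof. by rewrite card_F (leq_trans _ (leq_pexp2l _ n_ge4)). Qed.

Lemma g1_neq0 : g + 1 != 0.   Proof. by rewrite addr_eq0_pchar2. Qed.
Lemma c1_neq0 : c + 1 != 0.   Proof. by rewrite addr_eq0_pchar2. Qed.
Lemma cg_neq0 : c + g != 0.   Proof. by rewrite addr_eq0_pchar2. Qed.
Lemma cg1_neq0 : c + g + 1 != 0.
Proof. by rewrite -addrA addr_eq0_pchar2 // addrC. Qed.
Lemma cgI_neq0 : c * g + 1 != 0.
Proof.
apply: contraNneq c_neq_gV => /eqP; rewrite addr_eq0_pchar2 //.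
by move=> /eqP/(canRL (mulfK g0)) ->; rewrite mul1r.
Qed.
Lemma cgc1_neq0 : c * g + c + 1 != 0.
Proof.
apply: contraNneq c_neq_g1V => /eqP; rewrite -{2}[c]mulr1 -mulrDr addr_eq0_pchar2 //.
by move=> /eqP/(canRL (mulfK g1_neq0)) ->; rewrite mul1r.
Qed.

#[local] Hint Resolve g1_neq0 c1_neq0 cg_neq0 cg1_neq0 cgI_neq0 cgc1_neq0 : nonzero.

Lemma Fswap_g1 : Fswap g (g + 1) = (g + 1)^-1.
Proof.
rewrite (FswapE card_F_gt2) // !inE !negb_or g1_neq0 addr_eq_pchar2 // addrr_pchar2 //.
by rewrite g0 -addr_eq0_pchar2 // addrAC addrr_pchar2 // add0r oner_eq0.
Qed.

Lemma mem_exceptional (a x : F) :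
  (x \in exceptional g a) = (x \in [:: 0; 1; g]) || (x + a \in [:: 0; 1; g]).
Proof. by rewrite !inE !addr_eq_pchar2 // add0r (addrC 1) (addrC g) !orbA. Qed.

Lemma exceptionalD (a x : F) : x \in exceptional g a -> x + a \in exceptional g a.
Proof. by rewrite !mem_exceptional -addrA addrr_pchar2 // addr0 orbC. Qed.

Lemma regular_of_neq {x : F} : x != 0 -> x != 1 -> x != g -> regular x.
Proof. by move=> x0 x1 xg; rewrite !inE !negb_or x0 x1 xg. Qed.

Lemma cD_inv {a x y : F} : x + a = y -> regular x -> regular y -> D a x = y^-1 + c / x.
Proof. by move=> <- x3 y3; rewrite !(FswapE card_F_gt2). Qed.

Lemma cD_translate (a x y : F) : a != 0 -> x + y = a -> D a x != D a y.
Proof.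
move=> a0 xy; have -> : y = x + a by rewrite -xy addKr_pchar2.
rewrite -addrA addrr_pchar2 // addr0; apply/eqP=> E.
have : (1 + c) * (Fswap g (x + a) + Fswap g x) = 0.
  by rewrite -(addrr_pchar2 char2 (D a x)) {2}E; ring.
move/eqP; rewrite mulf_eq0 !addr_eq0_pchar2 // eq_sym (negbTE c1) /=.
move=> /eqP xa_x; have /eqP := Fswap_inj card_F_gt2 g0 g1 _ _ xa_x.
by rewrite -{2}[x]addr0 (can_eq (addKr x)) (negbTE a0).
Qed.

Lemma cDeltaAB0_le1 (b : F) : (cDeltaAB (Fswap g) c 0%R b <= 1)%N.
Proof.
apply/card_le1_eqP=> x y; rewrite !inE !addr0 => /eqP Ex /eqP Ey.
apply/(Fswap_inj card_F_gt2 g0 g1)/(mulfI (_ : 1 + c != 0)); first by rewrite addrC c1_neq0.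
by rewrite !mulrDl !mul1r Ex Ey.
Qed.

Lemma cD_root (a b x : F) : x \notin exceptional g a -> D a x = b ->
  b * x ^+ 2 + (a * b + 1 + c) * x + c * a = 0.
Proof.
rewrite mem_exceptional negb_or => /andP[x3 xa3] Dx.
have x0 : x != 0 by apply: contraNneq x3 => ->; rewrite mem_head.
have xa0 : x + a != 0 by apply: contraNneq xa3 => ->; rewrite mem_head.
have -> : b * x ^+ 2 + (a * b + 1 + c) * x + c * a =
    x * (x + a) * (b + ((x + a)^-1 + c / x)) by field; rewrite x0 xa0.
by rewrite -(cD_inv erefl x3 xa3) Dx addrr_pchar2 // mulr0.
Qed.

Lemma card_generic_solutions (a b : F) : a != 0 ->
  (#|[set x | D a x == b] :\: [set x in exceptional g a]| <= 2)%N.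
Proof.
move=> a0; apply: (@card_quadratic_roots _ b (a * b + 1 + c) (c * a)); first by nonzero.
by move=> x; rewrite in_setD !in_set => /andP[Ex /eqP Dx]; apply: cD_root.
Qed.

Lemma card_exceptional_solutions (a b : F) : a != 0 ->
  (#|[set x | D a x == b] :&: [set x in exceptional g a]| <= 3)%N.
Proof.
move=> a0; set S := [set x | _]; set E := [set x in _].
have sub : [set x + a | x in S :&: E] \subset E :\: S.
  apply/subsetP=> _ /imsetP[x /setIP[Sx Ex] ->]; move: Sx Ex; rewrite !in_set => /eqP <- Ex.
  rewrite exceptionalD // andbT; apply: cD_translate => //.
  by rewrite addrAC addrr_pchar2 // add0r.
have := subset_leq_card sub; rewrite card_imset; last exact: addIr.
have := cardsID S E; have : (#|E| <= 6)%N by rewrite cardsE card_size.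
by rewrite setIC; set k := #|S :&: E|; set l := #|E :\: S|; set m := #|E|; lia.
Qed.

Lemma cD_generic_solutionN {a b z h : F} (B w : F) : tr n h = 1 ->
  a * b + 1 + c = B -> h = b * (c * a) / B ^+ 2 + (w ^+ 2 + w) ->
  z \notin exceptional g a -> D a z = b -> False.
Proof.
move=> trh <- Eh Ez /(cD_root _ _ _ Ez)/eqP; apply/negP.
exact: tr1_quadratic_rootN char2 card_F _ _ _ _ _ _ trh Eh.
Qed.

Lemma cD1_values :
  [/\ D 1 0 = g^-1 + c, D 1 1 = 1 + c / g, D 1 g = (g + 1)^-1 & D 1 (g + 1) = c / (g + 1)].
Proof.
have F2 := card_F_gt2; split.
- by rewrite add0r (Fswap1 F2) (Fswap0 F2) mulr1.
- by rewrite addrr_pchar2 // (Fswap0 F2) (Fswap1 F2).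
- by rewrite Fswap_g1 (Fswapg F2 g0 g1) mulr0 addr0.
- by rewrite -addrA addrr_pchar2 // addr0 (Fswapg F2 g0 g1) add0r Fswap_g1.
Qed.

(* For a in {1, g, g + 1} two exceptional solutions that are not translates of
   each other determine c, and then a non-exceptional solution contradicts one
   of the trace hypotheses. *)
Lemma cD1_unique (b z : F) : z \notin exceptional g 1 -> D 1 z = b ->
  {in [:: 0; 1; g; g + 1] &, forall x y, D 1 x = b -> D 1 y = b -> x = y}.
Proof.
move=> Ez Dz; have [V0 V1 Vg Vg1] := cD1_values.
apply: in4_sym_rel => [// | x y Rxy Dy Dx | | | | | |]; first exact/esym/Rxy.
- move=> E1 E2; have := cD_translate 1 0 1 (oner_neq0 _) (add0r 1).
  by rewrite E1 E2 eqxx.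
- rewrite V0 Vg => E1 E2; exfalso.
  have Ec : c = (g * (g + 1))^-1.
    by apply: (eq_of_mulr_addr char2 1 _ _ (etrans E1 (esym E2))); [field2 | nonzero].
  apply: (cD_generic_solutionN ((g + 1) / g) (g / (g + 1) ^+ 2) tr3 _ _ Ez Dz);
    by rewrite -E1 Ec; field2.
- rewrite V0 Vg1 => E1 E2; exfalso.
  have Ec : c = (g + 1) / g ^+ 2.
    by apply: (eq_of_mulr_addr char2 (g / (g + 1)) _ _ (etrans E1 (esym E2))); [field2 | nonzero].
  apply: (cD_generic_solutionN ((g + 1) / g) ((g * (g + 1))^-1) tr3 _ _ Ez Dz);
    by rewrite -E1 Ec; field2.
- rewrite V1 Vg => E1 E2; exfalso.
  have Ec : c = g ^+ 2 / (g + 1).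
    by apply: (eq_of_mulr_addr char2 (g^-1) _ _ (etrans E1 (esym E2))); [field2 | nonzero].
  apply: (cD_generic_solutionN g 0 tr6 _ _ Ez Dz);
    by rewrite -E1 Ec; field2.
- rewrite V1 Vg1 => E1 E2; exfalso.
  have Ec : c = g * (g + 1).
    by apply: (eq_of_mulr_addr char2 ((g * (g + 1))^-1) _ _ (etrans E1 (esym E2)));
      [field2 | nonzero].
  apply: (cD_generic_solutionN ((g + 1) ^+ 2) 0 tr6 _ _ Ez Dz);
    by rewrite -E1 Ec; field2.
- move=> E1 E2; have := cD_translate 1 g (g + 1) (oner_neq0 _) (addKr_pchar2 char2 g 1).
  by rewrite E1 E2 eqxx.
Qed.

Lemma cDg_values :
  [/\ D g 0 = c, D g 1 = (g + 1)^-1 + c / g, D g g = 1 & D g (g + 1) = g^-1 + c / (g + 1)].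
Proof.
have F2 := card_F_gt2; split.
- by rewrite add0r (Fswapg F2 g0 g1) (Fswap0 F2) mulr1 add0r.
- by rewrite (addrC 1) Fswap_g1 (Fswap1 F2).
- by rewrite addrr_pchar2 // (Fswap0 F2) (Fswapg F2 g0 g1) mulr0 addr0.
- by rewrite addrAC addrr_pchar2 // add0r (Fswap1 F2) Fswap_g1.
Qed.

Lemma cDg_unique (b z : F) : z \notin exceptional g g -> D g z = b ->
  {in [:: 0; 1; g; g + 1] &, forall x y, D g x = b -> D g y = b -> x = y}.
Proof.
move=> Ez Dz; have [V0 V1 Vg Vg1] := cDg_values.
apply: in4_sym_rel => [// | x y Rxy Dy Dx | | | | | |]; first exact/esym/Rxy.
- rewrite V0 V1 => E1 E2; exfalso.
  have Ec : c = g / (g + 1) ^+ 2.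
    by apply: (eq_of_mulr_addr char2 ((g + 1) / g) _ _ (etrans E1 (esym E2))); [field2 | nonzero].
  apply: (cD_generic_solutionN ((g + 1)^-1) 0 tr6 _ _ Ez Dz);
    by rewrite -E1 Ec; field2.
- move=> E1 E2; have := cD_translate g 0 g g0 (add0r g).
  by rewrite E1 E2 eqxx.
- rewrite V0 Vg1 => E1 E2; exfalso.
  have Ec : c = (g + 1) / g ^+ 2.
    by apply: (eq_of_mulr_addr char2 (g / (g + 1)) _ _ (etrans E1 (esym E2))); [field2 | nonzero].
  have S : c * g + 1 = g^-1 by rewrite Ec; field2.
  apply: (cD_generic_solutionN ((g ^+ 2)^-1) g tr9 _ _ Ez Dz);
    by rewrite -E1 ?S Ec; field2.
- rewrite V1 Vg => E1 E2; exfalso.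
  have Ec : c = g ^+ 2 / (g + 1).
    by apply: (eq_of_mulr_addr char2 (g^-1) _ _ (etrans E1 (esym E2))); [field2 | nonzero].
  have S : c + g = g / (g + 1) by rewrite Ec; field2.
  apply: (cD_generic_solutionN ((g + 1)^-1) (g ^+ 2) tr7 _ _ Ez Dz);
    by rewrite -E1 ?S Ec; field2.
- move=> E1 E2; have xy : 1 + (g + 1) = g by rewrite addrCA addrr_pchar2 // addr0.
  by have := cD_translate g 1 (g + 1) g0 xy; rewrite E1 E2 eqxx.
- rewrite Vg Vg1 => E1 E2; exfalso.
  have Ec : c = (g + 1) ^+ 2 / g.
    by apply: (eq_of_mulr_addr char2 ((g + 1)^-1) _ _ (etrans E1 (esym E2))); [field2 | nonzero].
  apply: (cD_generic_solutionN ((g + 1) / g) (g ^+ 2 / (g + 1)) tr3 _ _ Ez Dz);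
    by rewrite -E1 Ec; field2.
Qed.

Lemma cDg1_values : [/\ D (g + 1) 0 = (g + 1)^-1 + c, D (g + 1) 1 = c / g,
  D (g + 1) g = g^-1 & D (g + 1) (g + 1) = 1 + c / (g + 1)].
Proof.
have F2 := card_F_gt2; split.
- by rewrite add0r Fswap_g1 (Fswap0 F2) mulr1.
- by rewrite addrCA addrr_pchar2 // addr0 (Fswapg F2 g0 g1) add0r (Fswap1 F2).
- by rewrite addKr_pchar2 // (Fswap1 F2) (Fswapg F2 g0 g1) mulr0 addr0.
- by rewrite addrr_pchar2 // (Fswap0 F2) Fswap_g1.
Qed.

Lemma cDg1_unique (b z : F) : z \notin exceptional g (g + 1) -> D (g + 1) z = b ->
  {in [:: 0; 1; g; g + 1] &, forall x y, D (g + 1) x = b -> D (g + 1) y = b -> x = y}.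
Proof.
move=> Ez Dz; have [V0 V1 Vg Vg1] := cDg1_values.
apply: in4_sym_rel => [// | x y Rxy Dy Dx | | | | | |]; first exact/esym/Rxy.
- rewrite V0 V1 => E1 E2; exfalso.
  have Ec : c = g / (g + 1) ^+ 2.
    by apply: (eq_of_mulr_addr char2 ((g + 1) / g) _ _ (etrans E1 (esym E2))); [field2 | nonzero].
  have S : c + g = g ^+ 3 / (g + 1) ^+ 2 by rewrite Ec; field2.
  apply: (cD_generic_solutionN (g ^+ 2 / (g + 1) ^+ 2) (g^-1) tr7 _ _ Ez Dz);
    by rewrite -E1 ?S Ec; field2.
- rewrite V0 Vg => E1 E2; exfalso.
  have Ec : c = (g * (g + 1))^-1.
    by apply: (eq_of_mulr_addr char2 1 _ _ (etrans E1 (esym E2))); [field2 | nonzero].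
  have S : c * g + 1 = g / (g + 1) by rewrite Ec; field2.
  apply: (cD_generic_solutionN ((g + 1)^-1) (g^-1) tr9 _ _ Ez Dz);
    by rewrite -E1 ?S Ec; field2.
- move=> E1 E2; have := cD_translate (g + 1) 0 (g + 1) g1_neq0 (add0r (g + 1)).
  by rewrite E1 E2 eqxx.
- move=> E1 E2; have := cD_translate (g + 1) 1 g g1_neq0 (addrC 1 g).
  by rewrite E1 E2 eqxx.
- rewrite V1 Vg1 => E1 E2; exfalso.
  have Ec : c = g * (g + 1).
    by apply: (eq_of_mulr_addr char2 ((g * (g + 1))^-1) _ _ (etrans E1 (esym E2)));
      [field2 | nonzero].
  have S : c + g = g ^+ 2 by rewrite Ec; field2.
  apply: (cD_generic_solutionN g g tr7 _ _ Ez Dz);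
    by rewrite -E1 ?S Ec; field2.
- rewrite Vg Vg1 => E1 E2; exfalso.
  have Ec : c = (g + 1) ^+ 2 / g.
    by apply: (eq_of_mulr_addr char2 ((g + 1)^-1) _ _ (etrans E1 (esym E2))); [field2 | nonzero].
  have S : c * g + 1 = g ^+ 2 by rewrite Ec; field2.
  apply: (cD_generic_solutionN g ((g ^+ 2)^-1) tr9 _ _ Ez Dz);
    by rewrite -E1 ?S Ec; field2.
Qed.

Lemma cD_exceptional (a : F) : a \notin [:: 0; 1; g; g + 1] ->
  [seq D a x | x <- exceptional g a] = [:: a^-1 + c; (1 + a)^-1 + c / g;
    (g + a)^-1; 1 + c / a; g^-1 + c / (a + 1); c / (a + g)].
Proof.
rewrite !inE !negb_or => /and4P[a0 a1 ag ag1]; have F2 := card_F_gt2.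
have reg_a : regular a by rewrite !inE !negb_or a0 a1 ag.
have reg_a1 : regular (a + 1).
  by rewrite !inE !negb_or addr_eq0_pchar2 // a1 !addr_eq_pchar2 // addrr_pchar2 // a0 ag1.
have reg_ag : regular (a + g).
  rewrite !inE !negb_or addr_eq0_pchar2 // ag !addr_eq_pchar2 // addrr_pchar2 //.
  by rewrite a0 (addrC 1) ag1.
congr [:: _; _; _; _; _; _].
- by rewrite add0r (FswapE F2) // (Fswap0 F2) mulr1.
- by rewrite (addrC 1) (FswapE F2) // (Fswap1 F2) addrC.
- by rewrite (addrC g) (FswapE F2) // (Fswapg F2 g0 g1) mulr0 addr0 addrC.
- by rewrite addrr_pchar2 // (Fswap0 F2) (FswapE F2).
- by rewrite addrAC addrr_pchar2 // add0r (Fswap1 F2) (FswapE F2).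
- by rewrite addrAC addrr_pchar2 // add0r (Fswapg F2 g0 g1) add0r (FswapE F2).
Qed.

Lemma cD_exceptional_uniq (a : F) : a \notin [:: 0; 1; g; g + 1] ->
  uniq [seq D a x | x <- exceptional g a].
Proof.
move=> a4; rewrite cD_exceptional //; move: a4; rewrite !inE !negb_or => /and4P[a0 a1 ag ag1].
have a1' : a + 1 != 0 by rewrite addr_eq0_pchar2.
have a1'' : 1 + a != 0 by rewrite addrC.
have ag' : a + g != 0 by rewrite addr_eq0_pchar2.
have ag'' : g + a != 0 by rewrite addrC.
have ag1' : a + g + 1 != 0 by rewrite -addrA addr_eq0_pchar2.
rewrite /= !inE !negb_or; do !(apply/andP; split) => //.
(* the fifteen pairs in order; translates {x, x + a} differ by a multiple of c + 1 *)
- by apply: (tr1_separates char2 card_F 1 1 (g / (c * (g + 1)))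
    (a * (1 + a) * g / (c * (g + 1))) a tr1); field2.
- by apply: (tr1_separates char2 card_F 1 g (g / c) (a * (g + a) / c) a tr2); field2.
- by apply: (addr_neq_pchar2 char2 ((c + 1) * (a + 1) / a)); [field2 | nonzero].
- by apply: (tr1_separates char2 card_F (c * g + 1) (g + 1) g (g * a * (a + 1)) a tr3); field2.
- by apply: (tr1_separates char2 card_F c (c * g + c + 1) g (a * (a + g)) a tr4); field2.
- by apply: (tr1_separates char2 card_F c (c * (g + 1)) (c * g + g ^+ 2 + g)
    (g * (1 + a) * (g + a)) a tr5); field2.
- by apply: (tr1_separates char2 card_F (c + g) (c * (g + 1)) (c * g)
    (g * a * (1 + a)) a tr6); field2.
- by apply: (addr_neq_pchar2 char2 ((c + 1) * (a + g + 1) / (g * (a + 1)))); [field2 | nonzero].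
- by apply: (tr1_separates char2 card_F c (c + g) (g ^+ 2) (g * (1 + a) * (a + g)) a tr7); field2.
- by apply: (tr1_separates char2 card_F 1 (c + g + 1) (c * g) (a * (g + a)) a tr8); field2.
- by apply: (tr1_separates char2 card_F 1 (c * g + 1) (c * g ^+ 2)
    (g * (g + a) * (a + 1)) a tr9); field2.
- by apply: (addr_neq_pchar2 char2 ((c + 1) / (a + g))); [field2 | nonzero].
- by apply: (tr1_separates char2 card_F 1 1 (c * g / (g + 1))
    (g * a * (a + 1) / (g + 1)) a tr10); field2.
- by apply: (tr1_separates char2 card_F 1 g (c * g) (a * (a + g)) a tr11); field2.
- by apply: (tr1_separates char2 card_F 1 (g + 1) (g + c * g ^+ 2 + c * g)
    (g * (a + 1) * (a + g)) a tr12); field2.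
Qed.

Lemma exceptional_special (a : F) : a \in [:: 1; g; g + 1] ->
  exceptional g a =i [:: 0; 1; g; g + 1].
Proof.
move=> a3 x; rewrite mem_exceptional !inE !addr_eq_pchar2 // add0r.
move: a3; rewrite !inE => /or3P[]/eqP->.
- rewrite addrr_pchar2 //.
  by case: (x == 0); case: (x == 1); case: (x == g); case: (x == g + 1).
- rewrite addrr_pchar2 // (addrC 1).
  by case: (x == 0); case: (x == 1); case: (x == g); case: (x == g + 1).
- rewrite addrCA addrr_pchar2 // addr0 addKr_pchar2 //.
  by case: (x == 0); case: (x == 1); case: (x == g); case: (x == g + 1).
Qed.

Lemma exceptional_solution_unique (a b z : F) : a != 0 ->
  z \notin exceptional g a -> D a z = b ->
  {in exceptional g a &, forall x y, D a x = b -> D a y = b -> x = y}.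
Proof.
move=> a0 Ez Dz; have [a3|a3] := boolP (a \in [:: 1; g; g + 1]).
  move=> x y; rewrite !(exceptional_special _ a3); move: x y.
  move: a3; rewrite !inE => /or3P[]/eqP a_eq; rewrite {}a_eq in Ez Dz *.
  - exact: cD1_unique Ez Dz.
  - exact: cDg_unique Ez Dz.
  - exact: cDg1_unique Ez Dz.
have a4 : a \notin [:: 0; 1; g; g + 1] by rewrite in_cons negb_or a0.
move=> x y Ex Ey Dx Dy.
exact: (uniq_map_in_inj (cD_exceptional_uniq _ a4) _ _ Ex Ey (etrans Dx (esym Dy))).
Qed.

Lemma cDeltaAB_le3 (a b : F) : (cDeltaAB (Fswap g) c a b <= 3)%N.
Proof.
have [->|a0] := eqVneq a 0; first exact: leq_trans (cDeltaAB0_le1 b) _.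
rewrite /cDeltaAB -(cardsID [set x in exceptional g a]).
have [->|[z]] := set_0Vmem ([set x | D a x == b] :\: [set x in exceptional g a]).
  by rewrite cards0 addn0 card_exceptional_solutions.
rewrite in_setD !in_set => /andP[Ez /eqP Dz].
rewrite -[3%N]/(1 + 2)%N leq_add ?card_generic_solutions //.
apply/card_le1_eqP=> x y; rewrite in_setI !in_set => /andP[/eqP Dx Ex] /andP[/eqP Dy Ey].
exact: (exceptional_solution_unique _ _ _ a0 Ez Dz _ _ Ey Ex Dy Dx).
Qed.

Lemma c2_div_c1_neq_g : c ^+ 2 + c + 1 != 0 -> c ^+ 2 / (c + 1) != g.
Proof.
move=> r1; apply/eqP=> ag; have := tr1_neq_sqr_add char2 card_F _
  ((c ^+ 4 + c + 1) / (c ^+ 2 + c + 1)) (tr_add3 char2 tr3 tr7 tr8).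
have S1 : c + g + 1 = (c + 1)^-1 by rewrite -ag; field2.
have S2 : c + g = c / (c + 1) by rewrite -ag; field2.
have S3 : g + 1 = (c ^+ 2 + c + 1) / (c + 1) by rewrite -ag; field2.
have E3 : g * (c * g + 1) / (g + 1) ^+ 2 = c ^+ 2 * (c ^+ 3 + c + 1) / (c ^+ 2 + c + 1) ^+ 2.
  by rewrite S3 -ag; field2.
have E78 : c * g ^+ 2 / (c + g) ^+ 2 + c * g / (c + g + 1) ^+ 2 = c ^+ 4.
  by rewrite S1 S2 -ag; field2.
by rewrite -addrA E78 E3 => /eqP; apply; field2.
Qed.

Lemma cDeltaAB_ge3_generic : c ^+ 2 + c + 1 != 0 -> c ^+ 3 + c + 1 != 0 ->
  (3 <= cDeltaAB (Fswap g) c (c ^+ 2 / (c + 1))%R c^-1)%N.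
Proof.
move=> r1 r2; have F2 := card_F_gt2.
have reg_a : regular (c ^+ 2 / (c + 1)).
  apply: regular_of_neq; first by nonzero.
    by apply: (addr_neq_pchar2 char2 ((c ^+ 2 + c + 1) / (c + 1))); [field2 | nonzero].
  exact: c2_div_c1_neq_g.
have ca : c + c ^+ 2 / (c + 1) = c / (c + 1) by field2.
have reg_ca : regular (c / (c + 1)).
  apply: regular_of_neq; first by nonzero.
    by apply: (addr_neq_pchar2 char2 (c + 1)^-1); [field2 | nonzero].
  apply/eqP=> cg'; have := tr1_neq_sqr_add char2 card_F _ c^-1 tr2.
  by rewrite -cg' => /eqP; apply; field2.
have reg_x : regular (c ^+ 3 / (c + 1)).
  apply: regular_of_neq; first by nonzero.
    by apply: (addr_neq_pchar2 char2 ((c ^+ 3 + c + 1) / (c + 1))); [field2 | nonzero].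
  apply/eqP=> xg; have := tr1_neq_sqr_add char2 card_F _ c^-1 tr11.
  by rewrite -xg => /eqP; apply; field2.
have xa : c ^+ 3 / (c + 1) + c ^+ 2 / (c + 1) = c ^+ 2 by field2.
have reg_xa : regular (c ^+ 2).
  apply: regular_of_neq; first by nonzero.
    by apply: (addr_neq_pchar2 char2 ((c + 1) ^+ 2)); [field2 | nonzero].
  apply/eqP=> cg'; have := tr1_neq_sqr_add char2 card_F _ (c + 1)^-1 tr1.
  have S : g + 1 = (c + 1) ^+ 2 by rewrite -cg'; field2.
  by rewrite S -cg' => /eqP; apply; field2.
apply: (@cDeltaAB_ge3 _ _ _ _ _ (c ^+ 2 / (c + 1)) c (c ^+ 3 / (c + 1))).
- rewrite /= !inE !negb_or; do !(apply/andP; split) => //.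
  + by apply: (addr_neq_pchar2 char2 (c / (c + 1))); [field2 | nonzero].
  + by apply: (addr_neq_pchar2 char2 (c ^+ 2)); [field2 | nonzero].
  + by apply: (addr_neq_pchar2 char2 (c * (c ^+ 2 + c + 1) / (c + 1))); [field2 | nonzero].
- by rewrite addrr_pchar2 // (Fswap0 F2) (FswapE F2) //; field2.
- by rewrite (cD_inv ca (regular_of_neq c0 c1 c_neq_g)) //; field2.
- by rewrite (cD_inv xa) //; field2.
Qed.

Lemma inv_cc1_neq_g : c ^+ 2 + c + 1 != 0 -> (c * (c + 1))^-1 != g.
Proof.
move=> r1; apply/eqP=> ag; have := tr1_neq_sqr_add char2 card_F _
  ((c + 1) ^+ 2 / (c ^+ 2 * (c ^+ 2 + c + 1))) (tr_add3 char2 tr4 tr6 tr9).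
have S1 : c * g + c + 1 = c ^+ 2 / (c + 1) by rewrite -ag; field2.
have S2 : c * g + 1 = c / (c + 1) by rewrite -ag; field2.
have S3 : g + 1 = (c ^+ 2 + c + 1) / (c * (c + 1)) by rewrite -ag; field2.
have E4 : c * g / (c * g + c + 1) ^+ 2 = (c + 1) / c ^+ 4 by rewrite S1 -ag; field2.
have E9 : c * g ^+ 2 / (c * g + 1) ^+ 2 = (c ^+ 3)^-1 by rewrite S2 -ag; field2.
have E6 : g * (c + g) / (c * (g + 1) ^+ 2) = (c ^+ 3 + c ^+ 2 + 1) / (c * (c ^+ 2 + c + 1) ^+ 2).
  by rewrite S3 -ag; field2.
by rewrite E4 E6 E9 => /eqP; apply; field2_big.
Qed.

Lemma cDeltaAB_ge3_cubic : c ^+ 2 + c + 1 != 0 -> c ^+ 3 + c + 1 = 0 ->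
  (3 <= cDeltaAB (Fswap g) c (c * (c + 1))^-1 (c ^+ 2))%N.
Proof.
move=> r1 r2; have F2 := card_F_gt2.
have r3 : c ^+ 3 + c ^+ 2 + 1 != 0.
  have -> : c ^+ 3 + c ^+ 2 + 1 = c ^+ 3 + c + 1 + c * (c + 1) by field2.
  by rewrite r2 add0r; nonzero.
have reg_a : regular (c * (c + 1))^-1.
  apply: regular_of_neq; first by nonzero.
    by apply: (addr_neq_pchar2 char2 ((c ^+ 2 + c + 1) / (c * (c + 1)))); [field2 | nonzero].
  exact: inv_cc1_neq_g.
have reg_x : regular (c + 1)^-1.
  apply: regular_of_neq; first by nonzero.
    by apply: (addr_neq_pchar2 char2 (c / (c + 1))); [field2 | nonzero].
  apply/eqP=> xg; have := tr1_neq_sqr_add char2 card_F _ c tr11.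
  by rewrite -xg => /eqP; apply; field2.
have xa : (c + 1)^-1 + (c * (c + 1))^-1 = c^-1 by field2.
have reg_xa : regular c^-1.
  apply: regular_of_neq; first by nonzero.
    by apply: (addr_neq_pchar2 char2 ((c + 1) / c)); [field2 | nonzero].
  by apply: contra_neq c_neq_gV => <-; rewrite invrK.
have reg_y : regular (c ^+ 2)^-1.
  apply: regular_of_neq; first by nonzero.
    by apply: (addr_neq_pchar2 char2 ((c + 1) ^+ 2 / c ^+ 2)); [field2 | nonzero].
  apply/eqP=> yg; have := tr1_neq_sqr_add char2 card_F _ (c + 1)^-1 tr10.
  have S : g + 1 = (c + 1) ^+ 2 / c ^+ 2 by rewrite -yg; field2.
  by rewrite S -yg => /eqP; apply; field2.
have ya : (c ^+ 2)^-1 + (c * (c + 1))^-1 = (c ^+ 2 * (c + 1))^-1 by field2.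
have reg_ya : regular (c ^+ 2 * (c + 1))^-1.
  apply: regular_of_neq; first by nonzero.
    by apply: (addr_neq_pchar2 char2 ((c ^+ 3 + c ^+ 2 + 1) / (c ^+ 2 * (c + 1))));
      [field2 | nonzero].
  apply/eqP=> yg; have := tr1_neq_sqr_add char2 card_F _ c tr2.
  by rewrite -yg => /eqP; apply; field2.
apply: (@cDeltaAB_ge3 _ _ _ _ _ 0 (c + 1)^-1 (c ^+ 2)^-1).
- rewrite /= !inE !negb_or; do !(apply/andP; split) => //.
  + by rewrite eq_sym; nonzero.
  + by rewrite eq_sym; nonzero.
  + by apply: (addr_neq_pchar2 char2 ((c ^+ 2 + c + 1) / (c ^+ 2 * (c + 1)))); [field2 | nonzero].
- by rewrite add0r (Fswap0 F2) (FswapE F2) // mulr1; field2.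
- by rewrite (cD_inv xa) //; field2.
- by rewrite (cD_inv ya) //; field2.
Qed.

Lemma cDeltaAB_ge3_cube_root : c ^+ 2 = c + 1 ->
  (3 <= cDeltaAB (Fswap g) c (c + g)%R ((g + 1) / (g * (c * g + 1)))%R)%N.
Proof.
move=> rel; have F2 := card_F_gt2.
have gg1 : g ^+ 2 + g + 1 != 0.
  by rewrite (_ : g ^+ 2 + g + 1 = (c + g) * (c + g + 1)); [nonzero | field2 rel].
pose x3 := c * (g ^+ 2 + g + 1) / (g + 1).
pose y3 := c ^+ 2 * g * (c + g) / (g + 1).
have reg_x1 : regular (c + g + 1).
  apply: regular_of_neq; first exact: cg1_neq0.
    by apply: (addr_neq_pchar2 char2 (c + g)); [field2 | nonzero].
  by apply: (addr_neq_pchar2 char2 (c + 1)); [field2 | nonzero].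
have reg_x2 : regular (c * g).
  apply: regular_of_neq; first by nonzero.
    by apply: (addr_neq_pchar2 char2 (c * g + 1)); [field2 | nonzero].
  by apply: (addr_neq_pchar2 char2 ((c + 1) * g)); [field2 | nonzero].
have x2a : c * g + (c + g) = c * (c * g + 1) by field2 rel.
have reg_y2 : regular (c * (c * g + 1)).
  apply: regular_of_neq; first by nonzero.
    by apply: (addr_neq_pchar2 char2 ((g + 1) * (c + 1))); [field2 rel | nonzero].
  by apply: (addr_neq_pchar2 char2 (c * (g + 1))); [field2 rel | nonzero].
have reg_x3 : regular x3.
  apply: regular_of_neq; first by rewrite /x3; nonzero.
    by apply: (tr1_neq char2 card_F c (c / (g + 1)) tr3); rewrite /x3; field2 rel.
  by apply: (tr1_neq char2 card_F g (c * g ^+ 2 / (g + 1)) tr3); rewrite /x3; field2 rel.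
have x3a : x3 + (c + g) = y3 by rewrite /x3 /y3; field2 rel.
have reg_y3 : regular y3.
  apply: regular_of_neq; first by rewrite /y3; nonzero.
    apply: (addr_neq_pchar2 char2 ((c * g + 1) ^+ 2 / (g + 1))); rewrite /y3;
      [field2 rel | nonzero].
  by apply: (addr_neq_pchar2 char2 (c * g ^+ 2 / (g + 1))); rewrite /y3; [field2 rel | nonzero].
apply: (@cDeltaAB_ge3 _ _ _ _ _ (c + g + 1) (c * g) x3).
- rewrite /= !inE !negb_or; do !(apply/andP; split) => //.
  + by apply: (addr_neq_pchar2 char2 ((c + 1) * (g + 1))); [field2 | nonzero].
  + apply: (addr_neq_pchar2 char2 ((c * g + 1) ^+ 2 / (g + 1))); rewrite /x3;
      [field2 rel | nonzero].
  + by apply: (addr_neq_pchar2 char2 (c / (g + 1))); rewrite /x3; [field2 rel | nonzero].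
- rewrite addrAC addrr_pchar2 // add0r (Fswap1 F2) (FswapE F2) //; field2 rel.
- by rewrite (cD_inv x2a) //; field2 rel.
- by rewrite (cD_inv x3a) // /x3 /y3; field2 rel.
Qed.

Lemma exists_cDeltaAB_ge3 : exists a b, (3 <= cDeltaAB (Fswap g) c a b)%N.
Proof.
have [r1|r1] := eqVneq (c ^+ 2 + c + 1) 0.
  exists (c + g), ((g + 1) / (g * (c * g + 1))); apply: cDeltaAB_ge3_cube_root.
  by apply/eqP; rewrite -addr_eq0_pchar2 // addrA r1.
have [r2|r2] := eqVneq (c ^+ 3 + c + 1) 0.
  by exists (c * (c + 1))^-1, (c ^+ 2); apply: cDeltaAB_ge3_cubic.
by exists (c ^+ 2 / (c + 1)), c^-1; apply: cDeltaAB_ge3_generic.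
Qed.

Theorem cDelta_Fswap : cDelta (Fswap g) c = 3%N.
Proof.
apply/eqP; rewrite eqn_leq; apply/andP; split.
  by apply/bigmax_leqP=> -[a b] _; apply: cDeltaAB_le3.
have [a [b ge3]] := exists_cDeltaAB_ge3; apply: leq_trans ge3 _.
by apply: (@leq_bigmax_cond _ _ (fun p => cDeltaAB (Fswap g) c p.1 p.2) (a, b)); rewrite c1.
Qed.

End CDifferentialUniformity.

Theorem mainTheorem8 (F : finFieldType) (n : nat) (c g : F) :
  (2%N \in [pchar F]) -> #|F| = (2 ^ n)%N -> (4 <= n)%N ->
  c != 0 -> c != 1 -> g != 0 -> g != 1 ->
  c \notin [:: g; g^-1; g + 1; (g + 1)^-1] ->
  tr n (g / (c * (g + 1))) = 1 ->
  tr n (c^-1 * g^-1) = 1 ->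
  tr n (g * (c * g + 1) / (g + 1) ^+ 2) = 1 ->
  tr n (c * g / (c * g + c + 1) ^+ 2) = 1 ->
  tr n (g * (c + g + 1) / (c * (g + 1) ^+ 2)) = 1 ->
  tr n (g * (c + g) / (c * (g + 1) ^+ 2)) = 1 ->
  tr n (c * g ^+ 2 / (c + g) ^+ 2) = 1 ->
  tr n (c * g / (c + g + 1) ^+ 2) = 1 ->
  tr n (c * g ^+ 2 / (c * g + 1) ^+ 2) = 1 ->
  tr n (c * g / (g + 1)) = 1 ->
  tr n (c * g^-1) = 1 ->
  tr n ((c * g + c + 1) * g / (g + 1) ^+ 2) = 1 ->
  cDelta (Fswap g) c = 3%N.
Proof.
move=> char2 card_F n_ge4 c0 c1 g0 g1.
rewrite !inE !negb_or => /and4P[c_neq_g c_neq_gV c_neq_g1 c_neq_g1V].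
exact: cDelta_Fswap.
Qed.
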